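(* Let $p$ be a prime with $p\equiv 1\pmod 4$, let $a$ be a generator of $\mathbb{F}_p^*$, let $k=\frac{p-1}{4}$, $\theta=\exp\!\left(\frac{2\pi i}{p-1}\right)$ and $\eta=\exp\!\left(\frac{2\pi i}{p}\right)$. For $0\le x<p$ define $\varphi_x\in\mathbb{C}(\mathbb{F}_p)$ by $$\varphi_x(n)=\begin{cases}\dfrac{1}{\sqrt{p}}\,\eta^{2^{-1}a^k n^2}, & x=0,\\[2mm] \dfrac{1}{\sqrt{p(p-1)}}\displaystyle\sum_{j=1}^{p-1}\theta^{x\log_a j}\,\eta^{a^k(j-n)^2-2^{-1}a^k n^2}, & 0<x<p,\end{cases}\qquad n\in\mathbb{F}_p.$$ Then for every $0\le x<p$, $\varphi_x$ is an eigenvector of the discrete Fourier transform $F$ with eigenvalue $(-i)^x$, where $i=\sqrt{-1}$; that is, $F\varphi_x=(-i)^x\varphi_x$.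
   Context: $\mathbb{C}(\mathbb{F}_p)$ is the space of functions $\mathbb{F}_p\to\mathbb{C}$. The discrete Fourier transform is $F[\varphi](m)=\frac{1}{\sqrt{p}}\sum_{n\in\mathbb{F}_p}\eta^{mn}\varphi(n)$. Exponents of $\eta$ are computed in $\mathbb{F}_p$ (with $2^{-1}$ the inverse of $2$ in $\mathbb{F}_p$ and $a^k\in\mathbb{F}_p$); for $j\in\mathbb{F}_p^*$, $\log_a j$ is the unique $m\in\{0,\dots,p-2\}$ with $a^m=j$. *)

From HB Require Import structures.
From mathcomp Require Import all_boot all_order all_algebra.
From mathcomp Require Import complex.
From mathcomp Require Import reals trigo.
Set Implicit Arguments. Unset Strict Implicit. Unset Printing Implicit Defensive.
Import Order.TTheory GRing.Theory Num.Theory.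
Local Open Scope ring_scope.
Local Open Scope complex_scope.

Definition expi (R : realType) (m : nat) : R[i] :=
  Complex (cos (2 * pi / m%:R)) (sin (2 * pi / m%:R)).

Definition etaF (R : realType) (p : nat) (e : 'F_p) : R[i] :=
  expi R p ^+ (nat_of_ord e).

(* discrete logarithm: the unique m in {0,..,p-2} with a^m = j
   (computed as the least such m; unique when a is a generator and j <> 0) *)
Definition dlog (p : nat) (a j : 'F_p) : nat :=
  find (fun m => a ^+ m == j) (iota 0 p.-1).

Definition DFT (R : realType) (p : nat) (phi : 'F_p -> R[i]) : 'F_p -> R[i] :=
  fun m => (Num.sqrt (p%:R : R))^-1%:C * \sum_(n : 'F_p) etaF R (m * n) * phi n.

Definition phix (R : realType) (p : nat) (a : 'F_p) (x : nat) : 'F_p -> R[i] :=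
  let k := (p.-1 %/ 4)%N in
  let ak := a ^+ k in
  fun n =>
  if x == 0%N then
    (Num.sqrt (p%:R : R))^-1%:C * etaF R ((2%:R)^-1 * ak * n ^+ 2)
  else
    (Num.sqrt ((p * p.-1)%:R : R))^-1%:C *
      \sum_(j : 'F_p | j != 0)
        expi R p.-1 ^+ (x * dlog a j) *
        etaF R (ak * (j - n) ^+ 2 - (2%:R)^-1 * ak * n ^+ 2).

Definition imagC (R : realType) : R[i] := Complex 0 1.

From HB Require Import structures.
From mathcomp Require Import all_boot all_order all_algebra finfield.
From mathcomp Require Import complex.
From mathcomp Require Import reals trigo.
From mathcomp Require Import ring zify.
Set Implicit Arguments. Unset Strict Implicit. Unset Printing Implicit Defensive.
Import Order.TTheory GRing.Theory Num.Theory.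
Local Open Scope ring_scope.
Local Open Scope complex_scope.

(* The chirp n |-> eta^(c n^2 / 2), where c = a^k is a square root of -1, is
   its own Fourier transform: completing the square reduces this to the
   quadratic Gauss sum G = sum_n eta^(n^2), and G = sqrt p.  For x > 0, phi_x is
   a theta^(x log_a)-weighted sum over j of the modulations n |-> eta^(-2cjn) of
   the chirp, which transform into translates of the chirp; the substitution
   j |-> c j turns the result back into phi_x, at the cost of the factor
   theta^(x k) = i^x in the weight, whence the eigenvalue (-i)^x.

   G = sqrt p is Gauss's evaluation.  G^2 = p by orthogonality of additive
   characters.  At q = eta^-2 the Gaussian binomials [p-1, j]_q are
   (-1)^j eta^(j (j+1)), so their alternating sum is eta^(-1/4) G; Gauss's
   identity for that sum rewrites G as prod_(t < (p-1)/2) 2 i sin(2 pi (2t+1)/p),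
   a positive number once the first half of the factors is paired with the
   second. *)

Lemma sum_double_succ n : (\sum_(i < n) 2 * i.+1 = n * n.+1)%N.
Proof. by elim: n => [|n IH]; rewrite ?big_ord0 // big_ord_recr /= IH; lia. Qed.

Lemma sum_odd n : (\sum_(i < n) (2 * i).+1 = n * n)%N.
Proof. by elim: n => [|n IH]; rewrite ?big_ord0 // big_ord_recr /= IH; lia. Qed.

Lemma sqr_eqN1_neq0 (F : nzRingType) (c : F) : c ^+ 2 = -1 -> c != 0.
Proof. by apply: contra_eq_neq => ->; rewrite expr0n eq_sym oppr_eq0 oner_eq0. Qed.

Lemma Im_conjc (R : rcfType) (z : R[i]) : complex.Im (conjc z) = - complex.Im z.
Proof. by case: z. Qed.

Lemma mul_two_i (R : rcfType) (u v : R) :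
  (2 * u%:C * 'i) * (2 * v%:C * 'i) = (4 * u * - v)%:C :> R[i].
Proof.
have i2 : 'i * 'i = -1 :> R[i] by apply/eqP; rewrite eq_complex /=; simpc.
rewrite mulrACA i2 !rmorphM rmorphN /= rmorph_nat; ring.
Qed.

Section RootsOfUnity.
Variable R : realType.

Lemma expiX (m n : nat) : expi R m ^+ n =
  Complex (cos (n%:R * (2 * pi / m%:R))) (sin (n%:R * (2 * pi / m%:R))).
Proof.
elim: n => [|n IH]; first by rewrite expr0 !mul0r cos0 sin0.
rewrite exprS IH /expi; set t := 2 * pi / m%:R.
rewrite -[n.+1]addn1 natrD mulrDl mul1r cosD sinD.
by simpc; congr Complex; ring.
Qed.

Lemma expi_expr_quarter k : (0 < k)%N -> expi R (4 * k) ^+ k = 'i.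
Proof.
move=> k_gt0; have k_neq0 : k%:R != 0 :> R by rewrite pnatr_eq0 -lt0n.
have E : k%:R * (2 * pi / (4 * k)%:R) = pi / 2 :> R by rewrite natrM; field.
by rewrite expiX E cos_pihalf sin_pihalf.
Qed.

Variable m : nat.
Hypothesis m_gt0 : (0 < m)%N.
Local Notation w := (expi R m).

Lemma expi_expr_order : w ^+ m = 1.
Proof.
have E : m%:R * (2 * pi / m%:R) = pi *+ 2 :> R.
  by rewrite mulr2n; field; rewrite pnatr_eq0 -lt0n.
by rewrite expiX E cos2pi sin2pi.
Qed.

Lemma expi_expr_mod n : w ^+ (n %% m) = w ^+ n.
Proof. by rewrite {2}(divn_eq n m) exprD mulnC exprM expi_expr_order expr1n mul1r. Qed.

Lemma expi_neq0 : w != 0.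
Proof.
apply/eqP => w0; move: expi_expr_order; rewrite w0 expr0n eqn0Ngt m_gt0 /=.
by move/eqP; rewrite eq_sym oner_eq0.
Qed.

Lemma conjc_expi : conjc w = w ^+ m.-1.
Proof.
apply: (mulfI expi_neq0); rewrite -exprS prednK // expi_expr_order.
by rewrite /expi; simpc; rewrite -!expr2 cos2Dsin2; congr Complex; ring.
Qed.

Lemma Im_expi_expr_gt0 j : (0 < j)%N -> (2 * j < m)%N -> 0 < complex.Im (w ^+ j).
Proof.
move=> j_gt0 jm; rewrite expiX /=; apply: sin_gt0_pi.
have m0 : 0 < m%:R :> R by rewrite ltr0n.
have j0 : 0 < j%:R :> R by rewrite ltr0n.
have jm' : 2 * j%:R < m%:R :> R by rewrite -natrM ltr_nat.
have pi0 := @pi_gt0 R.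
apply/andP; split; first by rewrite !mulr_gt0 ?invr_gt0.
have -> : j%:R * (2 * pi / m%:R) = (2 * j%:R / m%:R) * pi :> R.
  by field; rewrite gt_eqF.
by rewrite gtr_pMl // ltr_pdivrMr // mul1r.
Qed.

End RootsOfUnity.

Section PrimeField.
Variable p : nat.
Hypothesis p_pr : prime p.

Lemma Fp_natr_pred : (p.-1)%:R = -1 :> 'F_p.
Proof. by apply/eqP; rewrite -subr_eq0 opprK -mulrSr prednK ?prime_gt0 ?pchar_Fp_0. Qed.

Lemma Fp_expr_pred (j : 'F_p) : j != 0 -> j ^+ p.-1 = 1.
Proof.
move=> j_neq0; apply: (mulIf j_neq0); rewrite mul1r -exprSr prednK ?prime_gt0 //.
by have := expf_card j; rewrite card_Fp.
Qed.

Lemma sum_Fp_nat (V : nmodType) (f : nat -> V) : \sum_(n : 'F_p) f n = \sum_(i < p) f i.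
Proof. by rewrite -(big_mkord xpredT) -[in RHS](Fp_cast p_pr) big_mkord. Qed.

Lemma Fp_natr_neq0 i : (0 < i < p)%N -> (i%:R : 'F_p) != 0.
Proof.
move=> /andP [i_gt0 ip]; apply/eqP => /(congr1 (@nat_of_ord _)).
by rewrite val_Fp_nat // modn_small //= => i0; move: i_gt0; rewrite i0.
Qed.

Variable a : 'F_p.
Hypothesis a_prim : (p.-1).-primitive_root a.

Lemma dlogK (j : 'F_p) : j != 0 -> a ^+ dlog a j = j.
Proof.
move=> j_neq0; have [i ->] := prim_rootP a_prim (Fp_expr_pred j_neq0).
have a_i : has (fun n => a ^+ n == a ^+ i) (iota 0 p.-1).
  by apply/hasP; exists (val i); rewrite ?mem_iota /=.
have := nth_find 0 a_i; move: a_i; rewrite has_find size_iota => a_i.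
by rewrite nth_iota // add0n => /eqP.
Qed.

End PrimeField.

Section AdditiveCharacter.
Variables (R : realType) (p : nat).
Hypothesis p_pr : prime p.
Local Notation e := (@etaF R p).
Local Notation w := (expi R p).

Let p_gt0 : (0 < p)%N := prime_gt0 p_pr.

Lemma etaF_nat n : e n%:R = w ^+ n.
Proof. by rewrite /etaF val_Fp_nat // expi_expr_mod. Qed.

Lemma etaF0 : e 0 = 1.
Proof. by rewrite /etaF expr0. Qed.

Lemma etaFD x y : e (x + y) = e x * e y.
Proof. by rewrite -[x]natr_Zp -[y]natr_Zp -natrD !etaF_nat exprD. Qed.

Lemma etaFX x n : e x ^+ n = e (x * n%:R).
Proof.
elim: n => [|n IH]; first by rewrite mulr0 etaF0.
by rewrite exprS IH -etaFD -natr1 mulrDr mulr1 addrC.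
Qed.

Lemma etaF_sum n (f : 'I_n -> 'F_p) : e (\sum_(i < n) f i) = \prod_(i < n) e (f i).
Proof. exact: (big_morph e etaFD etaF0). Qed.

Lemma etaF_neq0 x : e x != 0.
Proof.
apply/eqP => ex0; have := etaFD x (- x).
by rewrite addrN etaF0 ex0 mul0r => /eqP; rewrite oner_eq0.
Qed.

Lemma conjc_etaF x : conjc (e x) = e (- x).
Proof.
have -> : conjc (e x) = conjc w ^+ val x by rewrite rmorphXn.
by rewrite conjc_expi // -exprM -etaF_nat natrM Fp_natr_pred // natr_Zp mulN1r.
Qed.

Hypothesis p_odd : odd p.

Lemma Im_etaF_neq0 x : x != 0 -> complex.Im (e x) != 0.
Proof.
move=> x_neq0; have x_gt0 : (0 < val x)%N.
  by rewrite lt0n; apply: contra x_neq0 => /eqP x0; apply/eqP/val_inj.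
have x_lt : (val x < p)%N by have := ltn_ord x; rewrite [X in (_ < X)%N -> _]Fp_cast.
have x2 : (2 * val x != p)%N by apply: contraTneq p_odd => <-; rewrite oddM.
case: (ltnP (2 * val x) p) => x_small; first by rewrite gt_eqF // Im_expi_expr_gt0.
have -> : e x = conjc (e (- x)) by rewrite conjc_etaF opprK.
have -> : - x = (p - val x)%:R by rewrite natrB ?(ltnW x_lt) // pchar_Fp_0 // sub0r natr_Zp.
rewrite etaF_nat Im_conjc oppr_eq0 gt_eqF // Im_expi_expr_gt0 //; first by rewrite subn_gt0.
lia.
Qed.

Lemma etaF_neq1 x : x != 0 -> e x != 1.
Proof. by move=> /Im_etaF_neq0; apply: contra => /eqP ->. Qed.

Lemma sum_etaFM b : \sum_(n : 'F_p) e (b * n) = if b == 0 then p%:R else 0.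
Proof.
have [->|b_neq0] := eqVneq b 0.
  under eq_bigr do rewrite mul0r etaF0.
  by rewrite sumr_const card_Fp.
set S := \sum_n _; have S_shift : e b * S = S.
  rewrite mulr_sumr [RHS](reindex_inj (addrI 1)) /=.
  by apply: eq_bigr => n _; rewrite -etaFD mulrDr mulr1.
move/eqP: S_shift; rewrite -subr_eq0 -{2}(mul1r S) -mulrBl mulf_eq0 subr_eq0.
by rewrite (negbTE (etaF_neq1 b_neq0)) => /eqP.
Qed.

End AdditiveCharacter.

Section QBinomial.
Variables (F : fieldType) (q : F).

Fixpoint qbinom (m k : nat) : F :=
  match m, k with
  | _, 0 => 1
  | 0, _.+1 => 0
  | m'.+1, k'.+1 => qbinom m' k' + q ^+ k'.+1 * qbinom m' k'.+1
  end.

Lemma qbinom_small m k : (m < k)%N -> qbinom m k = 0.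
Proof.
elim: m k => [|m IH] [|k] //= mk.
by rewrite !IH ?mulr0 ?addr0 // ltnW.
Qed.

Lemma qbinomSS m k : qbinom m.+1 k.+1 = qbinom m k + q ^+ k.+1 * qbinom m k.+1.
Proof. by []. Qed.

Definition qfact k := \prod_(i < k) (1 - q ^+ i.+1).
Definition qfall m k := \prod_(i < k) (1 - q ^+ (m - i)).

Lemma qfactS k : qfact k.+1 = qfact k * (1 - q ^+ k.+1).
Proof. by rewrite /qfact big_ord_recr. Qed.

Lemma qfallS m k : qfall m k.+1 = qfall m k * (1 - q ^+ (m - k)).
Proof. by rewrite /qfall big_ord_recr. Qed.

Lemma qfallSS m k : qfall m.+1 k.+1 = (1 - q ^+ m.+1) * qfall m k.
Proof. by rewrite /qfall big_ord_recl. Qed.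

Lemma qfall_small m k : (m < k)%N -> qfall m k = 0.
Proof. by move=> mk; rewrite /qfall (bigD1 (Ordinal mk)) //= subnn expr0 subrr mul0r. Qed.

Lemma qbinom_qfact m k : qbinom m k * qfact k = qfall m k.
Proof.
elim: m k => [|m IH] [|k].
- by rewrite /qfact /qfall !big_ord0 mulr1.
- by rewrite mul0r qfall_small.
- by rewrite /qfact /qfall !big_ord0 mulr1.
rewrite qbinomSS mulrDl -mulrA (IH k.+1) qfallSS qfactS mulrA (IH k) qfallS.
case: (leqP k m) => km; last by rewrite qfall_small // !(mul0r, mulr0, add0r).
have -> : q ^+ m.+1 = q ^+ k.+1 * q ^+ (m - k) by rewrite -exprD; congr (_ ^+ _); lia.
ring.
Qed.

Variable N : nat.
Hypothesis q_nroot : forall i, (0 < i <= N)%N -> q ^+ i != 1.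

Lemma qfact_neq0 k : (k <= N)%N -> qfact k != 0.
Proof.
move=> kN; apply/prodf_neq0 => i _.
by rewrite subr_eq0 eq_sym q_nroot //= (leq_trans (ltn_ord i)).
Qed.

Lemma qbinom_absorption m k : (m < N)%N ->
  (1 - q ^+ k.+1) * qbinom m.+1 k.+1 = (1 - q ^+ m.+1) * qbinom m k.
Proof.
move=> mN; case: (leqP k m) => km; last by rewrite !qbinom_small ?mulr0 // ltnS.
apply: (mulIf (qfact_neq0 (leq_trans km (ltnW mN)))).
transitivity (qfall m.+1 k.+1); first by rewrite -qbinom_qfact qfactS; ring.
by rewrite qfallSS -qbinom_qfact; ring.
Qed.

Definition qbinom_altsum b m := \sum_(k < b.+1) (-1) ^+ k * qbinom m k.

Lemma qbinom_altsumSS b m : (m < N)%N -> (m.+1 < b)%N ->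
  qbinom_altsum b m.+2 = (1 - q ^+ m.+1) * qbinom_altsum b m.
Proof.
move=> mN mb; set g := qbinom m.+1.
set A := \sum_(k < b) (-1) ^+ k * g k.
set B := \sum_(k < b) (-1) ^+ k * (q ^+ k.+1 * g k.+1).
set C := \sum_(k < b) (-1) ^+ k * g k.+1.
have gA : \sum_(k < b.+1) (-1) ^+ k * g k = A.
  by rewrite big_ord_recr /= /g qbinom_small // mulr0 addr0.
have gC : \sum_(k < b.+1) (-1) ^+ k * g k = 1 - C.
  rewrite big_ord_recl /= expr0 mul1r /C -sumrN; congr (_ + _).
  by apply: eq_bigr => i _; rewrite [(-1) ^+ i.+1]exprS mulN1r mulNr.
have -> : qbinom_altsum b m.+2 = 1 - A - B.
  rewrite /qbinom_altsum big_ord_recl expr0 mul1r -addrA; congr (_ + _).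
  rewrite /A /B -sumrN -sumrB; apply: eq_bigr => i _.
  rewrite lift0 [(-1) ^+ i.+1]exprS mulN1r qbinomSS -/g; ring.
have -> : (1 - q ^+ m.+1) * qbinom_altsum b m = C - B.
  rewrite /qbinom_altsum big_ord_recr /= (qbinom_small (ltnW mb)) mulr0 addr0 mulr_sumr.
  rewrite /C /B -sumrB; apply: eq_bigr => i _.
  rewrite mulrCA -qbinom_absorption // /g; ring.
by rewrite -gA gC; ring.
Qed.

Lemma qbinom_altsum_double b n : (2 * n <= N)%N -> (2 * n <= b)%N ->
  qbinom_altsum b (2 * n) = \prod_(t < n) (1 - q ^+ (2 * t).+1).
Proof.
elim: n => [|n IH] nN nb.
  rewrite big_ord0 /qbinom_altsum big_ord_recl expr0 mul1r big1 ?addr0 // => i _.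
  by rewrite mulr0.
rewrite big_ord_recr /= -IH; [|lia|lia].
have -> : (2 * n.+1 = (2 * n).+2)%N by lia.
by rewrite qbinom_altsumSS 1?mulrC //; lia.
Qed.

End QBinomial.

Section FourierTransform.
Variables (R : realType) (p : nat).
Hypothesis p_pr : prime p.
Local Notation e := (@etaF R p).
Local Notation F := (@DFT R p).

Lemma eq_DFT (f g : 'F_p -> R[i]) : f =1 g -> F f =1 F g.
Proof. by move=> fg m; rewrite /DFT; congr (_ * _); apply: eq_bigr => n _; rewrite fg. Qed.

Lemma DFT_scale (K : R[i]) f m : F (fun n => K * f n) m = K * F f m.
Proof.
rewrite /DFT [RHS]mulrCA; congr (_ * _); rewrite mulr_sumr.
by apply: eq_bigr => n _; rewrite mulrCA.
Qed.

Lemma DFT_sum (I : finType) (P : pred I) (f : I -> 'F_p -> R[i]) m :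
  F (fun n => \sum_(j | P j) f j n) m = \sum_(j | P j) F (f j) m.
Proof.
rewrite /DFT -mulr_sumr; congr (_ * _); rewrite exchange_big /=.
by apply: eq_bigr => n _; rewrite mulr_sumr.
Qed.

Lemma DFT_modulate b f m : F (fun n => e (b * n) * f n) m = F f (m + b).
Proof.
rewrite /DFT; congr (_ * _); apply: eq_bigr => n _.
by rewrite mulrA -etaFD // mulrDl.
Qed.

End FourierTransform.

Section GaussSum.
Variables (R : realType) (p : nat).
Hypotheses (p_pr : prime p) (p_mod4 : (p %% 4 = 1)%N).
Local Notation e := (@etaF R p).
Local Notation k := (p.-1 %/ 4)%N.
Local Notation h := ((2%:R : 'F_p)^-1).

Lemma p_eq_quarter : p = (4 * k).+1.
Proof. have := prime_gt0 p_pr; lia. Qed.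

Let p_odd : odd p.
Proof. by rewrite p_eq_quarter /= oddM. Qed.

Lemma Fp_two_neq0 : (2%:R : 'F_p) != 0.
Proof. by apply: Fp_natr_neq0 => //; have := prime_gt1 p_pr; lia. Qed.

Definition gauss_sum := \sum_(n : 'F_p) e (n ^+ 2).

Lemma gauss_sum_shift : gauss_sum = e (h ^+ 2) * \sum_(n : 'F_p) e (n * (n + 1)).
Proof.
rewrite /gauss_sum (reindex_inj (addIr h)) mulr_sumr; apply: eq_bigr => n _.
by rewrite -etaFD //; congr e; field; exact: Fp_two_neq0.
Qed.

Local Notation q := (e (- 2%:R)).

Lemma etaF_qnroot i : (0 < i <= p.-1)%N -> q ^+ i != 1.
Proof.
move=> /andP [i_gt0 ip]; rewrite etaFX //; apply: (etaF_neq1 R p_pr p_odd).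
rewrite mulf_neq0 ?oppr_eq0 ?Fp_two_neq0 ?Fp_natr_neq0 //.
by have := prime_gt1 p_pr; lia.
Qed.

Lemma qbinom_etaF j : (j <= p.-1)%N ->
  qbinom q p.-1 j = \prod_(i < j) (- e (2%:R * i.+1%:R)).
Proof.
move=> jp; apply: (mulIf (qfact_neq0 etaF_qnroot jp)).
rewrite qbinom_qfact /qfall /qfact -big_split /=; apply: eq_bigr => i _.
set X := 2%:R * i.+1%:R.
have ip : (i <= p.-1)%N by apply: leq_trans (ltnW (ltn_ord i)) jp.
have E1 : - 2%:R * (p.-1 - i)%:R = X :> 'F_p.
  by rewrite natrB // Fp_natr_pred // /X -[(i.+1)%:R]natr1; ring.
have E2 : - 2%:R * i.+1%:R = - X :> 'F_p by rewrite /X; ring.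
rewrite !etaFX // E1 E2 mulrBr mulr1 mulNr -etaFD // addrN etaF0; ring.
Qed.

Lemma qbinom_altsum_etaF : qbinom_altsum q p.-1 p.-1 = \sum_(n : 'F_p) e (n * (n + 1)).
Proof.
have -> : \sum_(n : 'F_p) e (n * (n + 1)) = \sum_(j < p) e (j * j.+1)%:R.
  rewrite -(sum_Fp_nat p_pr (fun j => e (j * j.+1)%:R)).
  by apply: eq_bigr => n _; rewrite natrM -natr1 natr_Zp.
rewrite /qbinom_altsum prednK ?prime_gt0 //; apply: eq_bigr => j _.
rewrite qbinom_etaF; last by rewrite -ltnS prednK ?prime_gt0.
rewrite prodrN card_ord mulrA -exprMn.
rewrite mulrNN mulr1 expr1n mul1r -etaF_sum // -sum_double_succ natr_sum.
by congr e; apply: eq_bigr => i _; rewrite natrM.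
Qed.

Local Notation sin_odd t := (complex.Im (e ((2 * t).+1)%:R)).

Lemma gauss_sum_prod : gauss_sum = \prod_(t < 2 * k) (2 * (sin_odd t)%:C * 'i).
Proof.
have half_sqr : ((2 * k * (2 * k))%:R : 'F_p) = h ^+ 2.
  have E : (2 * k)%:R = - h :> 'F_p.
    apply: (mulfI Fp_two_neq0); rewrite -natrM mulrN mulfV ?Fp_two_neq0 //.
    by rewrite -Fp_natr_pred //; congr _%:R; have := p_eq_quarter; lia.
  by rewrite natrM E mulrNN expr2.
have gauss_prod : e (- h ^+ 2) * gauss_sum = \prod_(t < 2 * k) (1 - q ^+ (2 * t).+1).
  rewrite gauss_sum_shift mulrA -etaFD // addNr etaF0 mul1r -qbinom_altsum_etaF.
  have E : p.-1 = (2 * (2 * k))%N by rewrite {1}p_eq_quarter /=; lia.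
  by have := qbinom_altsum_double etaF_qnroot (b := p.-1) (n := 2 * k); rewrite -E => ->.
have factor t : 1 - q ^+ (2 * t).+1 = e (- ((2 * t).+1)%:R) * (2 * (sin_odd t)%:C * 'i).
  rewrite -subcJ conjc_etaF // mulrBr -!etaFD // addNr etaF0 etaFX //.
  by congr (_ - e _); ring.
rewrite (eq_bigr _ (fun (t : 'I_(2 * k)) _ => factor t)) big_split /= in gauss_prod.
rewrite -etaF_sum // sumrN -natr_sum sum_odd half_sqr in gauss_prod.
by apply: (mulfI (etaF_neq0 R p_pr (- h ^+ 2))).
Qed.

Lemma sin_odd_gt0 t : (t < k)%N -> 0 < sin_odd t.
Proof. by move=> tk; rewrite etaF_nat //; apply: Im_expi_expr_gt0; have := p_eq_quarter; lia. Qed.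

Lemma sin_odd_lt0 t : (t < k)%N -> sin_odd (k + t) < 0.
Proof.
move=> tk; rewrite -oppr_gt0 -Im_conjc conjc_etaF //.
have tp : ((2 * (k + t)).+1 <= p)%N by have := p_eq_quarter; lia.
have -> : - ((2 * (k + t)).+1)%:R = (p - (2 * (k + t)).+1)%:R :> 'F_p.
  by rewrite natrB // pchar_Fp_0 // sub0r.
rewrite etaF_nat //.
by apply: Im_expi_expr_gt0; have := p_eq_quarter; lia.
Qed.

Lemma gauss_sum_gt0 : exists2 r : R, 0 < r & gauss_sum = r%:C.
Proof.
rewrite gauss_sum_prod (_ : (2 * k = k + k)%N); last by lia.
rewrite big_split_ord /= -big_split /=.
under eq_bigr => t _ do rewrite mul_two_i.
rewrite -rmorph_prod; eexists; last by [].
apply: prodr_gt0 => t _; rewrite !mulr_gt0 ?sin_odd_gt0 //.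
by rewrite oppr_gt0 sin_odd_lt0.
Qed.

Variable c : 'F_p.
Hypothesis c2 : c ^+ 2 = -1.

Lemma gauss_sum_sqr : gauss_sum ^+ 2 = p%:R.
Proof.
have c_neq0 := sqr_eqN1_neq0 c2.
have inner n : \sum_(m : 'F_p) e (n ^+ 2) * e (m ^+ 2) =
    \sum_(t : 'F_p) e (- t ^+ 2) * e ((- (2%:R * t)) * n).
  rewrite (reindex_inj (h := fun t => c * (n + t))) /=; last first.
    by move=> u v /(mulfI c_neq0) /addrI.
  by apply: eq_bigr => t _; rewrite -!etaFD //; congr e; rewrite exprMn c2; ring.
rewrite expr2 /gauss_sum mulr_suml.
under eq_bigr => n _ do rewrite mulr_sumr inner.
rewrite exchange_big /=.
under eq_bigr => t _ do rewrite -mulr_sumr sum_etaFM //.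
rewrite (bigD1 0) //= big1 ?addr0; last first.
  by move=> t t0; rewrite oppr_eq0 mulf_eq0 (negbTE Fp_two_neq0) (negbTE t0) mulr0.
by rewrite mulr0 oppr0 eqxx expr0n /= oppr0 etaF0 mul1r.
Qed.

Lemma gauss_sum_sqrt : gauss_sum = (Num.sqrt (p%:R : R))%:C.
Proof.
have [r r_gt0 Gr] := gauss_sum_gt0.
move: gauss_sum_sqr; rewrite Gr -rmorphXn -(rmorph_nat (real_complex R)) => /complexI <-.
by rewrite sqrtr_sqr ger0_norm // ltW.
Qed.

Local Notation F := (@DFT R p).

Lemma DFT_chirp m : F (fun n => e (h * c * n ^+ 2)) m = e (h * c * m ^+ 2).
Proof.
(* n |-> n + c m completes the square, and ((1 + c) / 2)^2 = c / 2 turns what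
   is left into the Gauss sum. *)
have u_neq0 : (1 + c) * h != 0.
  have u_sqr : ((1 + c) * h) ^+ 2 = h * c by field: c2; exact: Fp_two_neq0.
  by rewrite -sqrf_eq0 u_sqr mulf_neq0 ?invr_eq0 ?Fp_two_neq0 ?sqr_eqN1_neq0.
have sqrt_neq0 : Num.sqrt (p%:R : R) != 0 by rewrite sqrtr_eq0 -ltNge ltr0n prime_gt0.
rewrite /DFT.
suff -> : \sum_n e (m * n) * e (h * c * n ^+ 2) = e (h * c * m ^+ 2) * gauss_sum.
  by rewrite gauss_sum_sqrt mulrCA -rmorphM /= mulVf // mulr1.
rewrite /gauss_sum mulr_sumr [RHS](reindex_inj (mulfI u_neq0)).
rewrite [LHS](reindex_inj (addIr (c * m))) /=; apply: eq_bigr => n _.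
by rewrite -!etaFD //; congr e; field: c2; exact: Fp_two_neq0.
Qed.

Lemma DFT_shifted_chirp j m :
  F (fun n => e (c * (j - n) ^+ 2 - h * c * n ^+ 2)) m =
  e (- (c * j ^+ 2) + 2 * j * m + h * c * m ^+ 2).
Proof.
pose g n := e (c * j ^+ 2) * (e (- (2 * c * j) * n) * e (h * c * n ^+ 2)).
rewrite (@eq_DFT _ _ _ g) => [|n]; last first.
  by rewrite /g -!etaFD //; congr e; field; exact: Fp_two_neq0.
rewrite /g DFT_scale DFT_modulate // DFT_chirp -etaFD //.
by congr e; field: c2; exact: Fp_two_neq0.
Qed.

End GaussSum.

Section Eigenvectors.
Variables (R : realType) (p : nat).
Hypotheses (p_pr : prime p) (p_mod4 : (p %% 4 = 1)%N).
Variable a : 'F_p.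
Hypothesis a_prim : (p.-1).-primitive_root a.
Local Notation e := (@etaF R p).
Local Notation k := (p.-1 %/ 4)%N.
Local Notation c := (a ^+ k).
Local Notation h := ((2%:R : 'F_p)^-1).
Local Notation theta := (expi R p.-1).
Local Notation sq := (Num.sqrt (p%:R : R)).

Let k_gt0 : (0 < k)%N.
Proof. by have := prime_gt1 p_pr; lia. Qed.

Let p_pred_gt0 : (0 < p.-1)%N.
Proof. by have := prime_gt1 p_pr; lia. Qed.

Lemma prim_root_quarter_sqr : c ^+ 2 = -1.
Proof.
set y := c ^+ 2.
have y_sqr : y ^+ 2 = 1.
  by rewrite /y -!exprM -(prim_expr_order a_prim); congr (_ ^+ _); lia.
have y_neq1 : y != 1.
  by rewrite /y -exprM -(expr0 a) (eq_prim_root_expr a_prim) mod0n modn_small; lia.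
have : (y - 1) * (y + 1) == 0 by rewrite -subr_sqr expr1n y_sqr subrr.
by rewrite mulf_eq0 subr_eq0 (negbTE y_neq1) addr_eq0 => /eqP.
Qed.

Lemma expi_quarter : theta ^+ k = 'i.
Proof.
have E : p.-1 = (4 * k)%N by have := p_eq_quarter p_pr p_mod4; lia.
by have := expi_expr_quarter R k_gt0; rewrite -E.
Qed.

Lemma expi_dlog i : theta ^+ dlog a (a ^+ i) = theta ^+ i.
Proof.
have a_neq0 : a != 0 by rewrite (prim_root_eq0 a_prim) -lt0n.
have /eqP := dlogK p_pr a_prim (expf_neq0 i a_neq0).
rewrite (eq_prim_root_expr a_prim) => /eqP dlog_mod.
by rewrite -expi_expr_mod // dlog_mod expi_expr_mod.
Qed.

Lemma DFT_phix0 m : DFT (phix R a 0) m = phix R a 0 m.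
Proof.
rewrite (@eq_DFT _ _ _ (fun n => sq^-1%:C * e (h * c * n ^+ 2))) // DFT_scale.
by rewrite (DFT_chirp R p_pr p_mod4 prim_root_quarter_sqr).
Qed.

Variable x : nat.
Hypothesis x_gt0 : (0 < x)%N.
Local Notation chi j := (theta ^+ (x * dlog a j)).
Local Notation K := ((Num.sqrt ((p * p.-1)%:R : R))^-1%:C).
Local Notation psi m :=
  (K * \sum_(j : 'F_p | j != 0) chi j * e (- (c * j ^+ 2) + 2 * j * m + h * c * m ^+ 2)).

Lemma chiM_prim_root j : j != 0 -> chi (c * j) = 'i ^+ x * chi j.
Proof.
move=> j_neq0; rewrite -{1}(dlogK p_pr a_prim j_neq0) -exprD mulnC exprM expi_dlog.
by rewrite exprD expi_quarter exprMn -exprM mulnC.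
Qed.

Lemma phixE n : phix R a x n =
  K * \sum_(j : 'F_p | j != 0) chi j * e (c * (j - n) ^+ 2 - h * c * n ^+ 2).
Proof. by rewrite /phix eqn0Ngt x_gt0. Qed.

Lemma DFT_phix m : DFT (phix R a x) m = psi m.
Proof.
rewrite (eq_DFT phixE) DFT_scale DFT_sum; congr (_ * _); apply: eq_bigr => j _.
by rewrite DFT_scale (DFT_shifted_chirp R p_pr p_mod4 prim_root_quarter_sqr).
Qed.

Lemma phix_rotate m : phix R a x m = 'i ^+ x * psi m.
Proof.
have c_neq0 := sqr_eqN1_neq0 prim_root_quarter_sqr.
rewrite phixE [RHS]mulrCA; congr (_ * _).
rewrite mulr_sumr [LHS](reindex_inj (mulfI c_neq0)) /=.
rewrite (eq_bigl (fun j => j != 0)) => [|j]; last by rewrite mulf_eq0 negb_or c_neq0.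
apply: eq_bigr => j j_neq0; rewrite chiM_prim_root // [RHS]mulrA; congr (_ * e _).
by field: prim_root_quarter_sqr; exact: Fp_two_neq0.
Qed.

End Eigenvectors.

Unset Implicit Arguments.

Theorem theorem4 (R : realType) (p : nat) (a : 'F_p) (x : nat) :
  prime p -> (p %% 4 = 1)%N -> (p.-1).-primitive_root a -> (x < p)%N ->
  @DFT R p (@phix R p a x) = (fun n => (- imagC R) ^+ x * @phix R p a x n).
Proof.
move=> p_pr p_mod4 a_prim _; apply: boolp.funext => m.
case: (posnP x) => [->|x_gt0]; first by rewrite expr0 mul1r DFT_phix0.
have i_inv : - imagC R * 'i = 1 by apply/eqP; rewrite eq_complex /=; simpc.
by rewrite DFT_phix // phix_rotate // [RHS]mulrA -exprMn i_inv expr1n mul1r.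
Qed.
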